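(* Let $b\in(0,+\infty]$, $\beta>0$, $\alpha\ge0$, and $L'>L\ge0$ with $L+\alpha>0$. If $u,g\in\mathbb R$ satisfy $u\in H^{FP}_{\alpha,\beta,L,b}(g)$, then $u\in H^{FP}_{\alpha,\beta,L',b}(g)$.
   Context: For $L\ge0$ with $L+\alpha>0$, put $s:=\beta/(L+\alpha)$; the set $H^{FP}_{\alpha,\beta,L,b}(g)$ for $g\in\mathbb R$ is defined as follows. If $\sqrt{2s}\le b$: $u\in H^{FP}_{\alpha,\beta,L,b}(g)$ iff one of (a) $u=-b$ and $g\ge\alpha b$; (b) $u=b$ and $g\le-\alpha b$; (c) $u=0$ and $|g|\le(L+\alpha)\sqrt{2s}$; (d) $\alpha>0$, $\alpha u=-g$ and $|g|\in\alpha[\sqrt{2s},b]$; (e) $\alpha=0$, $g=0$ and $|u|\in[\sqrt{2s},b]$ holds (with (a),(b) void if $b=+\infty$). If $\sqrt{2s}>b$: $u\in H^{FP}_{\alpha,\beta,L,b}(g)$ iff one of (a) $u=-b$ and $g\ge(L+\alpha)(b/2+s/b)-Lb$; (b) $u=b$ and $g\le-\big((L+\alpha)(b/2+s/b)-Lb\big)$; (c) $u=0$ and $|g|\le(L+\alpha)(b/2+s/b)$; (d) $\alpha>0$, $\alpha u=-g$ and $|g|\in\alpha[\sqrt{2s},b]$; (e) $\alpha=0$, $g=0$ and $|u|\in[\sqrt{2s},b]$ holds. *)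

From Stdlib Require Import Reals.
Open Scope R_scope.

(* The extended threshold b ∈ (0,+∞] is encoded as [option R]:
   [Some bb] is the finite value bb, [None] is +∞. *)

Definition HFP (alpha beta L : R) (b : option R) (g u : R) : Prop :=
  let s := beta / (L + alpha) in
  match b with
  | None =>
      (* sqrt(2s) <= +∞ always; cases (a),(b) are void *)
         (u = 0 /\ Rabs g <= (L + alpha) * sqrt (2 * s))
      \/ (alpha > 0 /\ alpha * u = - g /\ alpha * sqrt (2 * s) <= Rabs g)
      \/ (alpha = 0 /\ g = 0 /\ sqrt (2 * s) <= Rabs u)
  | Some bb =>
      (sqrt (2 * s) <= bb /\
         (  (u = - bb /\ g >= alpha * bb)
         \/ (u = bb /\ g <= - (alpha * bb))
         \/ (u = 0 /\ Rabs g <= (L + alpha) * sqrt (2 * s))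
         \/ (alpha > 0 /\ alpha * u = - g /\
               alpha * sqrt (2 * s) <= Rabs g <= alpha * bb)
         \/ (alpha = 0 /\ g = 0 /\ sqrt (2 * s) <= Rabs u <= bb)))
   \/ (bb < sqrt (2 * s) /\
         (  (u = - bb /\ g >= (L + alpha) * (bb / 2 + s / bb) - L * bb)
         \/ (u = bb /\ g <= - ((L + alpha) * (bb / 2 + s / bb) - L * bb))
         \/ (u = 0 /\ Rabs g <= (L + alpha) * (bb / 2 + s / bb))
         \/ (alpha > 0 /\ alpha * u = - g /\
               alpha * sqrt (2 * s) <= Rabs g <= alpha * bb)
         \/ (alpha = 0 /\ g = 0 /\ sqrt (2 * s) <= Rabs u <= bb)))
  end.

(* Raising L to L' lowers the radius r = sqrt (2 beta / (L + alpha)) and raises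
   (L + alpha) r = sqrt (2 beta (L + alpha)), so each case of H^FP keeps holding
   with the same branch, except when b lies between the two radii.  There the
   point moves from the regime b < r to the regime r' <= b, and the thresholds
   of the first regime dominate those of the second because b < r means
   (L + alpha) b / 2 < beta / b. *)

From Stdlib Require Import Reals Lra.
Open Scope R_scope.

Definition fp_cases (alpha r bb ta tc g u : R) : Prop :=
     (u = - bb /\ g >= ta)
  \/ (u = bb /\ g <= - ta)
  \/ (u = 0 /\ Rabs g <= tc)
  \/ (alpha > 0 /\ alpha * u = - g /\ alpha * r <= Rabs g <= alpha * bb)
  \/ (alpha = 0 /\ g = 0 /\ r <= Rabs u <= bb).

Definition fp_cap (A beta bb : R) : R := A * (bb / 2 + beta / A / bb).

Lemma HFP_Some (alpha beta L bb g u : R) :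
  let r := sqrt (2 * (beta / (L + alpha))) in
  HFP alpha beta L (Some bb) g u <->
     (r <= bb /\ fp_cases alpha r bb (alpha * bb) ((L + alpha) * r) g u)
  \/ (bb < r /\ fp_cases alpha r bb (fp_cap (L + alpha) beta bb - L * bb)
                  (fp_cap (L + alpha) beta bb) g u).
Proof. reflexivity. Qed.

Lemma fp_cases_mono (alpha r r' bb ta ta' tc tc' g u : R) :
  0 <= alpha -> r' <= r -> ta' <= ta -> tc <= tc' ->
  fp_cases alpha r bb ta tc g u -> fp_cases alpha r' bb ta' tc' g u.
Proof.
  intros Ha Hr Hta Htc.
  assert (alpha * r' <= alpha * r) by (apply Rmult_le_compat_l; lra).
  unfold fp_cases; intros [C|[C|[C|[C|C]]]].
  - left; lra.
  - right; left; lra.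
  - right; right; left; lra.
  - right; right; right; left; lra.
  - right; right; right; right; lra.
Qed.

Lemma HFP_None_mono (alpha beta L L' g u : R) :
  0 <= alpha ->
  sqrt (2 * (beta / (L' + alpha))) <= sqrt (2 * (beta / (L + alpha))) ->
  (L + alpha) * sqrt (2 * (beta / (L + alpha)))
    <= (L' + alpha) * sqrt (2 * (beta / (L' + alpha))) ->
  HFP alpha beta L None g u -> HFP alpha beta L' None g u.
Proof.
  intros Ha Hr HAr; unfold HFP; cbv zeta.
  assert (alpha * sqrt (2 * (beta / (L' + alpha)))
          <= alpha * sqrt (2 * (beta / (L + alpha)))) by (apply Rmult_le_compat_l; lra).
  intros [C|[C|C]]; [left | right; left | right; right]; lra.
Qed.

Lemma sqrt_2s_lt (beta A A' : R) :
  0 < beta -> 0 < A -> A < A' ->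
  sqrt (2 * (beta / A')) < sqrt (2 * (beta / A)).
Proof.
  intros Hb HA HAA.
  apply sqrt_lt_1.
  - apply Rlt_le, Rmult_lt_0_compat, Rdiv_lt_0_compat; lra.
  - apply Rlt_le, Rmult_lt_0_compat, Rdiv_lt_0_compat; lra.
  - apply Rmult_lt_compat_l; [lra|].
    unfold Rdiv; apply Rmult_lt_compat_l; [lra|].
    apply Rinv_lt_contravar; nra.
Qed.

Lemma mul_sqrt_2s (beta A : R) :
  0 <= beta -> 0 < A -> A * sqrt (2 * (beta / A)) = sqrt (2 * beta * A).
Proof.
  intros Hb HA.
  rewrite <- (sqrt_square A) at 1 by lra.
  rewrite <- sqrt_mult_alt by nra.
  f_equal; field; lra.
Qed.

Lemma mul_sqrt_2s_le (beta A A' : R) :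
  0 <= beta -> 0 < A -> A <= A' ->
  A * sqrt (2 * (beta / A)) <= A' * sqrt (2 * (beta / A')).
Proof.
  intros Hb HA HAA.
  rewrite !mul_sqrt_2s by lra.
  apply sqrt_le_1; nra.
Qed.

Lemma mul_sqrt_2s_sqr (beta A : R) :
  0 <= beta -> 0 < A ->
  A * sqrt (2 * (beta / A)) * sqrt (2 * (beta / A)) = 2 * beta.
Proof.
  intros Hb HA.
  rewrite Rmult_assoc, sqrt_sqrt.
  - field; lra.
  - apply Rmult_le_pos; [lra|]. apply Rmult_le_pos; [lra | apply Rlt_le, Rinv_0_lt_compat; lra].
Qed.

Lemma fp_cap_eq (A beta bb : R) :
  0 < A -> 0 < bb -> fp_cap A beta bb = A * bb / 2 + beta / bb.
Proof. intros HA Hbb; unfold fp_cap; field; lra. Qed.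

Lemma fp_cap_le (A A' beta bb : R) :
  0 < A -> A <= A' -> 0 < bb -> fp_cap A beta bb <= fp_cap A' beta bb.
Proof. intros HA HAA Hbb; rewrite !fp_cap_eq by lra; nra. Qed.

Lemma fp_cap_sub_le (alpha beta L L' bb : R) :
  0 < L + alpha -> L <= L' -> 0 < bb ->
  fp_cap (L' + alpha) beta bb - L' * bb <= fp_cap (L + alpha) beta bb - L * bb.
Proof. intros HA HL Hbb; rewrite !fp_cap_eq by lra; nra. Qed.

Lemma half_lt_of_lt_sqrt_2s (beta A bb : R) :
  0 <= beta -> 0 < A -> 0 < bb -> bb < sqrt (2 * (beta / A)) ->
  A * bb / 2 < beta / bb.
Proof.
  intros Hb HA Hbb Hlt.
  pose proof (mul_sqrt_2s_sqr beta A Hb HA).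
  assert (bb * bb < sqrt (2 * (beta / A)) * sqrt (2 * (beta / A)))
    by (apply Rmult_le_0_lt_compat; lra).
  assert (A * bb * bb < 2 * beta) by nra.
  apply (Rmult_lt_reg_r bb); [lra|].
  replace (beta / bb * bb) with beta by (field; lra).
  lra.
Qed.

Lemma fp_cap_sub_ge (alpha beta L bb : R) :
  0 <= beta -> 0 < L + alpha -> 0 < bb ->
  bb < sqrt (2 * (beta / (L + alpha))) ->
  alpha * bb <= fp_cap (L + alpha) beta bb - L * bb.
Proof.
  intros Hb HA Hbb Hlt.
  pose proof (half_lt_of_lt_sqrt_2s beta _ bb Hb HA Hbb Hlt).
  rewrite fp_cap_eq by lra; lra.
Qed.

(* Both sides are compared with 2 beta / bb, which lies between them. *)
Lemma fp_cap_le_mul_sqrt_2s (beta A A' bb : R) :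
  0 <= beta -> 0 < A -> 0 < A' -> 0 < bb ->
  bb < sqrt (2 * (beta / A)) -> sqrt (2 * (beta / A')) <= bb ->
  fp_cap A beta bb <= A' * sqrt (2 * (beta / A')).
Proof.
  intros Hb HA HA' Hbb Hlt Hle.
  pose proof (half_lt_of_lt_sqrt_2s beta A bb Hb HA Hbb Hlt).
  pose proof (mul_sqrt_2s_sqr beta A' Hb HA').
  set (r' := sqrt (2 * (beta / A'))) in *.
  assert (Hr' : 0 <= A' * r') by (apply Rmult_le_pos; [lra | apply sqrt_pos]).
  assert (2 * beta <= A' * r' * bb) by (rewrite <- H0; apply Rmult_le_compat_l; lra).
  assert (2 * (beta / bb) <= A' * r').
  { apply (Rmult_le_reg_r bb); [lra|].
    replace (2 * (beta / bb) * bb) with (2 * beta) by (field; lra); lra. }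
  rewrite fp_cap_eq by lra; lra.
Qed.

Theorem mainTheorem13 (b : option R) (alpha beta L L' u g : R) :
  (forall bb, b = Some bb -> 0 < bb) ->
  0 < beta -> 0 <= alpha -> 0 <= L -> L < L' -> 0 < L + alpha ->
  HFP alpha beta L b g u ->
  HFP alpha beta L' b g u.
Proof.
  intros Hbb Hb Ha HL HLL HA.
  assert (HA' : 0 < L' + alpha) by lra.
  pose proof (sqrt_2s_lt beta _ (L' + alpha) Hb HA ltac:(lra)) as Hr.
  pose proof (mul_sqrt_2s_le beta _ (L' + alpha) ltac:(lra) HA ltac:(lra)) as HAr.
  destruct b as [bb|]; [|now apply HFP_None_mono; lra].
  specialize (Hbb bb eq_refl).
  rewrite !HFP_Some; cbv zeta.
  set (r := sqrt (2 * (beta / (L + alpha)))) in *.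
  set (r' := sqrt (2 * (beta / (L' + alpha)))) in *.
  intros [[Hle H] | [Hlt H]].
  - left; split; [lra|]; eapply fp_cases_mono, H; lra.
  - destruct (Rle_or_lt r' bb) as [Hle' | Hlt'].
    + left; split; [lra|]; eapply fp_cases_mono, H; try lra.
      * apply fp_cap_sub_ge; [lra | lra | lra | exact Hlt].
      * apply fp_cap_le_mul_sqrt_2s; [lra | lra | lra | lra | exact Hlt | exact Hle'].
    + right; split; [lra|]; eapply fp_cases_mono, H; try lra.
      * now apply fp_cap_sub_le; lra.
      * now apply fp_cap_le; lra.
Qed.
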